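(* Let $F$ be a positive integer. The directed graph $\mathrm{G}(\mathcal{I}(F))$ is a tree with root $\mathrm{C}(F)$. Moreover, for $S\in\mathcal{I}(F)$, the children of $S$ in $\mathrm{G}(\mathcal{I}(F))$ are exactly the semigroups $(S\setminus\{x\})\cup\{F-x\}$ where $x$ ranges over the minimal generators of $S$ satisfying: (1) $\frac{F}{2}<x<F$; (2) $2x-F\notin S$; (3) $3x\neq 2F$; (4) $4x\neq 3F$; (5) $F-x<\mathrm{m}(S)$.
   Context: A numerical semigroup is a subset $S\subseteq\mathbb{N}$ (with $\mathbb{N}$ the set of nonnegative integers) closed under addition, containing $0$, with $\mathbb{N}\setminus S$ finite. Its Frobenius number is the largest integer not in $S$; its multiplicity $\mathrm{m}(S)$ is the smallest positive integer in $S$; its minimal generators are the elements of its unique minimal system of generators. A numerical semigroup is irreducible if it cannot be expressed as the intersection of two numerical semigroups properly containing it. $\mathcal{I}(F)$ denotes the set of irreducible numerical semigroups with Frobenius number $F$. $\mathrm{C}(F)=\{0\}\cup\{z\in\mathbb{Z}: z\ge\lceil\frac{F+1}{2}\rceil\}\setminus\{F\}$. The directed graph $\mathrm{G}(\mathcal{I}(F))$ has vertex set $\mathcal{I}(F)$, and $(T,S)$ is an edge iff $\mathrm{m}(T)<\frac{F}{2}$ and $S=(T\setminus\{\mathrm{m}(T)\})\cup\{F-\mathrm{m}(T)\}$. A directed graph is a tree with root $r$ if for every vertex $v\neq r$ there is a unique path (sequence of distinct edges $(v_0,v_1),\dots,(v_{n-1},v_n)$ with $v_0=v$, $v_n=r$)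 from $v$ to $r$. If $(v,w)$ is an edge, $v$ is called a child of $w$. *)

From mathcomp Require Import all_boot.
Set Implicit Arguments. Unset Strict Implicit. Unset Printing Implicit Defensive.

Definition nset := nat -> bool.

Definition is_numsg (S : nset) : Prop :=
  S 0 /\ (forall x y, S x -> S y -> S (x + y)) /\ exists N, forall n, N <= n -> S n.

Definition frobenius (S : nset) (F : nat) : Prop :=
  ~~ S F /\ forall n, F < n -> S n.

Definition multiplicity (S : nset) (m : nat) : Prop :=
  0 < m /\ S m /\ forall k, 0 < k -> k < m -> ~~ S k.

Inductive gen (A : nset) : nat -> Prop :=
| gen0 : gen A 0
| genS a n : A a -> gen A n -> gen A (a + n).

Definition generates (A S : nset) : Prop := forall n, S n <-> gen A n.

Definition min_gen_system (S A : nset) : Prop :=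
  generates A S /\
  forall B : nset, (forall x, B x -> A x) -> (exists x, A x /\ ~~ B x) -> ~ generates B S.

Definition minimal_generator (S : nset) (x : nat) : Prop :=
  exists A, min_gen_system S A /\ A x.

Definition subset (S T : nset) : Prop := forall z, S z -> T z.

Definition irreducible (S : nset) : Prop :=
  is_numsg S /\
  ~ exists S1 S2 : nset, is_numsg S1 /\ is_numsg S2 /\
      subset S S1 /\ S <> S1 /\ subset S S2 /\ S <> S2 /\
      S = (fun z => S1 z && S2 z).

Definition IF (F : nat) (S : nset) : Prop := irreducible S /\ frobenius S F.

(* C(F) = {0} ∪ {z >= ceil((F+1)/2)} \ {F};  ceil((F+1)/2) = (F+2)/2 *)
Definition CF (F : nat) : nset :=
  fun z => (z == 0) || ((F.+2)./2 <= z) && (z != F).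

Definition swap (T : nset) (a b : nat) : nset :=
  fun z => (T z && (z != a)) || (z == b).

Definition edge (F : nat) (T S : nset) : Prop :=
  IF F T /\ IF F S /\
  exists m, multiplicity T m /\ 2 * m < F /\ S = swap T m (F - m).

(* q is (the tail of) a path v = v0, v1, ..., vn = r through distinct edges:
   the vertex sequence is v :: q *)
Definition is_path (T : Type) (E : T -> T -> Prop) (v r : T) (q : seq T) : Prop :=
  let p := v :: q in
  last v q = r /\
  (forall i, i.+1 < size p -> E (nth v p i) (nth v p i.+1)) /\
  (forall i j, i < j -> j.+1 < size p ->
     (nth v p i, nth v p i.+1) <> (nth v p j, nth v p j.+1)).

Definition is_tree (T : Type) (V : T -> Prop) (E : T -> T -> Prop) (r : T) : Prop :=
  V r /\ forall v, V v -> v <> r -> exists! q, is_path E v r q.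

(* The proof rests on the classical characterization of I(F): a numerical
   semigroup with Frobenius number F is irreducible iff it is symmetric with
   respect to F, i.e. for x < F with 2x <> F exactly one of x, F - x is in S
   ([IF_iff_symmetric]).  With it, membership in I(F) of a semigroup obtained by
   exchanging x for F - x reduces to closure under addition ([swap_IF]).
   - Tree: every T <> C(F) in I(F) has multiplicity m < F/2
     ([small_multiplicity]), its parent is again in I(F) ([parent_IF]), and the
     parent has fewer elements below F/2 ([parent_rank]); edges are functional
     and C(F) is a sink, so a general statement about graphs with a decreasing
     rank ([tree_of_descent]) applies.
   - Children: a minimal generator is an indecomposable element and conversely
     ([minimal_generator_indecomposable], [indecomposable_minimal_generator]);
     the section [Parent] shows that a child satisfies the five conditions, the
     section [Child] that they make the exchange land in I(F) with
     multiplicity F - x. *)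

From Pilot Require Import Defs.
From mathcomp Require Import all_boot zify.
From Stdlib Require Import FunctionalExtensionality Classical.
Set Implicit Arguments. Unset Strict Implicit. Unset Printing Implicit Defensive.

Section Paths.
Variables (T : Type) (E : T -> T -> Prop) (r : T).

Lemma path_tail v w q : is_path E v r (w :: q) -> is_path E w r q.
Proof.
move=> [hl [he hd]]; split; first by [].
split=> [i /= hi | i j ij /= hj].
- by have := he i.+1 hi; rewrite /= !(set_nth_default w v) //=; lia.
- by have := hd i.+1 j.+1 ij hj; rewrite /= !(set_nth_default w v) //=; lia.
Qed.

(* Prepending an edge to a path gives a path, provided the new start vertex does
   not occur on the old path (so that no edge is repeated). *)
Lemma path_cons v w q : E v w -> is_path E w r q ->
  (forall j, j <= size q -> nth w (w :: q) j <> v) -> is_path E v r (w :: q).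
Proof.
move=> evw [hl [he hd]] hne; split; first by [].
split=> [[|i] /= hi | [|i] [|j] //= ij hj].
- exact: evw.
- by rewrite !(set_nth_default w v) /=; try lia; apply: he.
- rewrite (set_nth_default w v) /=; last lia.
  by move=> [e _]; apply: (hne j); [lia | rewrite e].
- by rewrite !(set_nth_default w v) /=; try lia; apply: hd.
Qed.

Variables (V : T -> Prop) (rank : T -> nat).
Hypothesis E_fun : forall a b c, E a b -> E a c -> b = c.
Hypothesis root_sink : forall b, ~ E r b.
Hypothesis descent :
  forall v, V v -> v <> r -> exists w, V w /\ E v w /\ rank w < rank v.

Lemma path_nil : is_path E r r [::].
Proof. by split=> //; split=> [[] | [] []]. Qed.

Lemma path_unique q1 q2 v : is_path E v r q1 -> is_path E v r q2 -> q1 = q2.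
Proof.
elim: q1 q2 v => [|w1 q1 IH] [|w2 q2] v //.
- by move=> [/= vr _] [_ [/(_ 0 isT)]]; rewrite /= vr => /root_sink.
- by move=> [_ [/(_ 0 isT) e _]] [/= vr _]; move: e; rewrite /= vr => /root_sink.
- move=> p1 p2; have ew : w1 = w2 by apply: (E_fun (p1.2.1 0 isT) (p2.2.1 0 isT)).
  by subst w2; congr (_ :: _); apply: IH (path_tail p1) (path_tail p2).
Qed.

(* Following rank-decreasing edges yields a path to the root whose vertices all
   have rank at most that of the start (hence differ from it). *)
Lemma descending_path n v : rank v <= n -> V v -> v <> r ->
  exists q, is_path E v r q /\ forall j, rank (nth v (v :: q) j) <= rank v.
Proof.
elim: n v => [|n IH] v hv Vv vr; have [w [Vw [evw lt_wv]]] := descent Vv vr.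
  by move: hv; rewrite leqn0 => /eqP rv0; rewrite rv0 in lt_wv.
have w_new q : (forall j, rank (nth w (w :: q) j) <= rank w) ->
    forall j, j <= size q -> nth w (w :: q) j <> v.
  by move=> bq j _ e; have := bq j; rewrite e; lia.
have [wr | wr] := classic (w = r).
  subst w; exists [:: r]; split.
    by apply: path_cons evw path_nil (w_new _ _) => -[|j] //=; rewrite nth_nil.
  by move=> [|[|j]] //=; [exact: ltnW | rewrite nth_nil].
have [q [pq bq]] := IH w ltac:(lia) Vw wr.
exists (w :: q); split; first exact: path_cons (w_new q bq).
move=> [|j] //=; have [jq | qj] := ltnP j (size (w :: q)).
  by rewrite (set_nth_default w v jq); have := bq j; lia.
by rewrite nth_default.
Qed.

Lemma tree_of_descent : V r -> is_tree V E r.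
Proof.
move=> Vr; split=> // v Vv vr.
have [q [pq _]] := descending_path (leqnn (rank v)) Vv vr.
by exists q; split=> // q'; apply: path_unique.
Qed.
End Paths.

Lemma gap_sub (S : nset) F a : (forall a b, S a -> S b -> S (a + b)) ->
  ~~ S F -> S a -> a <= F -> ~~ S (F - a).
Proof. by move=> Sadd nSF Sa aF; apply: contra nSF => SFa; rewrite -(subnKC aF) Sadd. Qed.

Lemma multiplicity_exists S : is_numsg S -> exists m, multiplicity S m.
Proof.
move=> [S0 [_ [N HN]]].
have exP : exists k, (0 < k) && S k by exists N.+1; rewrite HN.
case: (ex_minnP exP) => m /andP [m0 Sm] mmin; exists m; split=> //; split=> // k k0 km.
by apply/negP => Sk; have := mmin k; rewrite k0 Sk => /(_ isT); lia.
Qed.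

Lemma multiplicity_le S m b : multiplicity S m -> S b -> 0 < b -> m <= b.
Proof. by move=> [_ [_ hm]] Sb b0; rewrite leqNgt; apply: contraL Sb => /(hm _ b0). Qed.

Lemma multiplicity_unique S m1 m2 : multiplicity S m1 -> multiplicity S m2 -> m1 = m2.
Proof.
move=> h1 h2; apply/eqP; rewrite eqn_leq.
by rewrite (multiplicity_le h1 h2.2.1 h2.1) (multiplicity_le h2 h1.2.1 h1.1).
Qed.

(* S is symmetric with respect to F: for x < F with 2x <> F, either x or F - x
   lies in S (this covers both the symmetric and the pseudo-symmetric case). *)
Definition symmetric (F : nat) (S : nset) : Prop :=
  forall x, x < F -> 2 * x != F -> ~~ S x -> S (F - x).

Lemma numsg_adjoin S h : is_numsg S -> (forall b, S b -> 0 < b -> S (h + b)) ->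
  S (h + h) -> is_numsg (fun z => S z || (z == h)).
Proof.
move=> [S0 [Sadd [N HN]]] hS hh; split; first by rewrite S0.
split; last by exists N => n /HN ->.
have hS' b : S b -> S (h + b) || (h + b == h).
  by case: (posnP b) => [-> | b0] Sb; [rewrite addn0 eqxx orbT | rewrite hS].
move=> a b /orP [Sa | /eqP ->] /orP [Sb | /eqP ->].
- by rewrite Sadd.
- by rewrite addnC hS'.
- exact: hS'.
- by rewrite hh.
Qed.

(* If x and F - x are both gaps (2x <> F), the largest such gap h lies above F/2
   and h + S^+ is contained in S, so h can be adjoined to S. *)
Lemma gap_above_half S F x : is_numsg S -> frobenius S F ->
  x < F -> 2 * x != F -> ~~ S x -> ~~ S (F - x) ->
  exists h, [/\ h < F, ~~ S h, F < 2 * h & forall b, S b -> 0 < b -> S (h + b)].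
Proof.
move=> [S0 [Sadd _]] [nSF SF] xF x2 nSx nSFx.
pose P y := [&& y < F, ~~ S y, ~~ S (F - y) & 2 * y != F].
have exP : exists y, P y by exists x; apply/and4P.
have P_bounded y : P y -> y <= F by move=> /and4P [/ltnW].
have [h /and4P [hF nSh nSFh h2] hmax] := ex_maxnP exP P_bounded.
have h0 : 0 < h by case: (posnP h) nSh => [-> | //]; rewrite S0.
have hmaxP y : y < F -> ~~ S y -> ~~ S (F - y) -> 2 * y != F -> y <= h.
  by move=> *; apply: hmax; apply/and4P.
have h_large : F < 2 * h.
  have : F - h <= h by apply: hmaxP => //; [lia | rewrite subKn // ltnW | lia].
  lia.
exists h; split=> // b Sb b0.
case: (ltngtP F (h + b)) => [/SF // | hbF | hbF].
- apply/negPn/negP => nShb.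
  have : h + b <= h; last lia.
  apply: hmaxP => //; try lia.
  apply: contra nSFh => Shb; have -> : F - h = (F - (h + b)) + b by lia.
  exact: Sadd.
- by move: nSFh; rewrite hbF addKn Sb.
Qed.

(* Irreducible implies symmetric: otherwise S = (S u {h}) n (S u {F}) with h from
   [gap_above_half]. *)
Lemma IF_symmetric F S : IF F S -> symmetric F S.
Proof.
move=> [[nS irr] fS] x xF x2 nSx; apply/negPn/negP => nSFx.
have [h [hF nSh h_large hS]] := gap_above_half nS fS xF x2 nSx nSFx.
have [nSF SF] := fS.
apply: irr; exists (fun z => S z || (z == h)), (fun z => S z || (z == F)).
split; first by apply: numsg_adjoin => //; apply: SF; lia.
split; first by apply: numsg_adjoin => // *; apply: SF; lia.
split; first by move=> z ->.
split; first by move/(congr1 (fun T : nset => T h)); rewrite eqxx orbT (negbTE nSh).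
split; first by move=> z ->.
split; first by move/(congr1 (fun T : nset => T F)); rewrite eqxx orbT (negbTE nSF).
apply: functional_extensionality => z; case Sz: (S z) => //=.
by case: (eqVneq z h) => [-> | //]; apply/esym/eqP; lia.
Qed.

Lemma symmetric_maximal F S T : frobenius S F -> symmetric F S ->
  is_numsg T -> Defs.subset S T -> ~~ T F -> T = S.
Proof.
move=> [_ SF] sym [_ [Tadd _]] ST nTF.
apply: functional_extensionality => z; apply/idP/idP => [Tz | /ST //].
apply/negPn/negP => nSz; move/negP: nTF; apply.
case: (ltngtP F z) => [/SF | zF | -> //]; first by rewrite (negbTE nSz).
have [zz | zz] := eqVneq (2 * z) F.
  by rewrite -zz mul2n -addnn Tadd.
by rewrite -(subnKC (ltnW zF)) Tadd // ST // sym.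
Qed.

Lemma IF_iff_symmetric F S : IF F S <-> [/\ is_numsg S, frobenius S F & symmetric F S].
Proof.
split=> [IS | [nS fS sym]]; first by have [[nS _] fS] := IS; split=> //; exact: IF_symmetric.
split=> //; split=> // [[S1 [S2 [n1 [n2 [s1 [e1 [s2 [e2 e]]]]]]]]].
have max Si : is_numsg Si -> Defs.subset S Si -> S <> Si -> Si F.
  by move=> ni si ei; apply/negPn/negP => /(symmetric_maximal fS sym ni si) /esym.
by move: fS.1; rewrite e /= (max S1) ?(max S2).
Qed.

Lemma swapK (T : nset) a b : T a -> ~~ T b -> swap (swap T a b) b a = T.
Proof.
move=> Ta nTb; apply: functional_extensionality => z; rewrite /swap.
have [-> | za] := eqVneq z a; first by rewrite orbT Ta.
have [-> | zb] := eqVneq z b; first by rewrite andbF (negbTE nTb).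
by rewrite !andbT !orbF.
Qed.

(* Exchanging x for F - x (0 < x < F) in a member of I(F) preserves the Frobenius
   number and the symmetry, so the result is in I(F) as soon as it is closed
   under addition. *)
Lemma swap_IF F S x : IF F S -> 0 < x < F ->
  (forall a b, swap S x (F - x) a -> swap S x (F - x) b -> swap S x (F - x) (a + b)) ->
  IF F (swap S x (F - x)).
Proof.
move=> /IF_iff_symmetric [[S0 _] [nSF SF] sym] /andP [x0 xF] add.
have large n : F < n -> swap S x (F - x) n.
  by move=> nF; rewrite /swap SF //=; apply/orP; left; apply/eqP; lia.
apply/IF_iff_symmetric; split.
- split; first by rewrite /swap S0 /=; apply/orP; left; apply/eqP; lia.
  by split=> //; exists F.+1.
- by split=> //; rewrite /swap (negbTE nSF) /=; apply/eqP; lia.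
- move=> y yF y2; rewrite /swap => /norP [/nandP [nSy | /negPn/eqP ->] /eqP yFx].
  + by rewrite sym //=; apply/orP; left; apply/eqP; lia.
  + by rewrite eqxx orbT.
Qed.

Definition indecomposable (S : nset) (x : nat) : Prop :=
  forall a b, S a -> S b -> a + b = x -> a = 0 \/ b = 0.

Lemma gen_add A n k : gen A n -> gen A k -> gen A (n + k).
Proof. by move=> gn gk; elim: gn => [|a n' An _ IH]; [rewrite add0n | rewrite -addnA; exact: genS]. Qed.

Lemma gen_mono (A B : nset) n : (forall z, A z -> B z) -> gen A n -> gen B n.
Proof. by move=> AB; elim=> [|a n' Aa _ IH]; [exact: gen0 | exact: genS (AB _ Aa) IH]. Qed.

(* A minimal generator is indecomposable: otherwise removing it from the minimal
   system of generators would still generate S. *)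
Lemma minimal_generator_indecomposable S x :
  minimal_generator S x -> S x /\ indecomposable S x.
Proof.
move=> [A [[genA minA] Ax]].
have Sx : S x by apply/genA; rewrite -[x]addn0; apply: genS => //; exact: gen0.
split=> // a b Sa Sb ab.
case: (posnP a) => [-> | a0]; first by left.
case: (posnP b) => [-> | b0]; first by right.
pose B z := A z && (z != x).
have BA z : B z -> A z by case/andP.
case: (minA B BA); first by exists x; rewrite /B eqxx andbF.
have below y : gen A y -> y < x -> gen B y.
  elim=> [|c n' Ac _ IH] lt; first exact: gen0.
  by apply: genS; [rewrite /B Ac; apply/eqP; lia | apply: IH; lia].
have gBx : gen B x by rewrite -ab; apply: gen_add; apply: below; try lia; exact/genA.
move=> n; rewrite genA; split; last exact: gen_mono.
elim=> [|c n' Ac _ IH]; first exact: gen0.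
have [-> | cx] := eqVneq c x; first exact: gen_add.
by apply: genS => //; rewrite /B Ac.
Qed.

(* Conversely, the indecomposable positive elements of S form a minimal system of
   generators, so each of them is a minimal generator. *)
Lemma indecomposable_minimal_generator S x : is_numsg S -> S x -> 0 < x ->
  indecomposable S x -> minimal_generator S x.
Proof.
move=> [S0 [Sadd _]] Sx x0 irr.
pose split_at z a := (0 < a) && S a && S (z - a).
pose A z := [&& 0 < z, S z & ~~ has (split_at z) (iota 0 z)].
have SA n : gen A n -> S n.
  by elim=> // c n' /and3P [_ Sc _] _ IH; apply: Sadd.
have AS n : S n -> gen A n.
  elim/ltn_ind: n => n IH Sn; case: (posnP n) => [-> | n0]; first exact: gen0.
  case hA: (has (split_at n) (iota 0 n)).
    case/hasP: hA => a; rewrite mem_iota => ai /andP [/andP [a0 Sa] Sna].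
    have -> : n = a + (n - a) by lia.
    by apply: gen_add; apply: IH => //; lia.
  by rewrite -[n]addn0; apply: genS; [rewrite /A n0 Sn hA | exact: gen0].
exists A; split; last first.
  rewrite /A x0 Sx /=; apply/hasP => -[a]; rewrite mem_iota => ai /andP [/andP [a0 Sa] Sxa].
  by have := irr a (x - a) Sa Sxa; lia.
split=> [n | B BA [y [Ay nBy]] gB]; first by split; [exact: AS | exact: SA].
have /gB gy : S y by case/and3P: Ay.
case/and3P: Ay => y0 _ /hasP; apply.
case: gy y0 nBy => [|c n' Bc gn]; first by [].
have /and3P [c0 Sc _] := BA _ Bc.
have Sn' : S n' by apply/gB.
case: (posnP n') => [-> | n0]; first by rewrite addn0 Bc.
by exists c; rewrite ?mem_iota /split_at ?c0 ?Sc ?addKn //; lia.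
Qed.

Lemma CF_IF F : 0 < F -> IF F (CF F).
Proof.
move=> F0; apply/IF_iff_symmetric; rewrite /CF; split.
- split=> //; split; last by exists F.+1 => n nF; apply/orP; right; apply/andP; split; lia.
  move=> a b /orP [/eqP -> // | /andP [a1 a2]] /orP [/eqP -> | /andP [b1 b2]].
    by rewrite addn0 a1 a2 orbT.
  by apply/orP; right; apply/andP; split; lia.
- split; first by apply/negP => /orP [/eqP | /andP [_ /eqP]]; lia.
  by move=> n nF; apply/orP; right; apply/andP; split; lia.
- move=> x xF x2 /norP [x0 /nandP [x1 | /negPn x1]]; last by move/eqP: x1; lia.
  by apply/orP; right; apply/andP; split; lia.
Qed.

(* The multiplicity of C(F) is at least F/2, so C(F) has no outgoing edge. *)
Lemma CF_multiplicity F m : multiplicity (CF F) m -> F <= 2 * m.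
Proof. by move=> [m0 [Cm _]]; move: Cm => /orP [/eqP | /andP [m1 _]]; lia. Qed.

(* Every other member of I(F) has multiplicity below F/2: if m(T) >= F/2 then
   symmetry forces T = C(F). *)
Lemma small_multiplicity F T m : IF F T -> T <> CF F -> multiplicity T m -> 2 * m < F.
Proof.
move=> IT TC Tm; rewrite ltnNge; apply/negP => mF; apply: TC.
have /IF_iff_symmetric [[T0 [Tadd _]] [nTF TF] sym] := IT.
have small_gap z : 0 < z -> 2 * z < F -> ~~ T z.
  by move=> z0 zF; apply/negP => /(multiplicity_le Tm) /(_ z0); lia.
apply: functional_extensionality => z; rewrite /CF.
have [-> | z0] := posnP z; first by rewrite T0.
have [Fz | zF] := ltnP F z.
  by rewrite TF //; apply/esym/orP; right; apply/andP; split; lia.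
have [-> | zF'] := eqVneq z F; first by rewrite (negbTE nTF) andbF.
rewrite /= andbT; have [Fz | zF2] := ltnP F (2 * z).
- have -> : (F.+2)./2 <= z by lia.
  apply/negPn/negP => nTz.
  have TFz : T (F - z) by apply: sym => //; lia.
  by have := small_gap (F - z); rewrite TFz; lia.
- have /negbTE -> : ~~ ((F.+2)./2 <= z) by rewrite -ltnNge; lia.
  apply/negbTE; rewrite leq_eqVlt in zF2; case/orP: zF2 => [/eqP zz | zF2].
    by apply: contra nTF => Tz; rewrite -zz mul2n -addnn Tadd.
  exact: small_gap.
Qed.

(* The number of elements of T below F/2; it strictly decreases along edges and
   serves as the rank of the tree. *)
Definition nsmall (F : nat) (T : nset) : nat :=
  count (fun z => T z && (2 * z < F)) (iota 0 F).

Definition child_via (F : nat) (S T : nset) (x : nat) : Prop :=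
  minimal_generator S x /\ (F < 2 * x /\ x < F) /\ ~~ S (2 * x - F) /\
  3 * x <> 2 * F /\ 4 * x <> 3 * F /\
  (exists m, multiplicity S m /\ F - x < m) /\ T = swap S x (F - x).

Lemma count_lt (P Q : pred nat) s y : (forall x, P x -> Q x) -> y \in s -> Q y -> ~~ P y ->
  count P s < count Q s.
Proof.
move=> PQ; elim: s => [|a s IH] //= ys Qy nPy.
move: ys; rewrite in_cons => /orP [/eqP e|ys].
- rewrite -e Qy (negbTE nPy) add0n add1n ltnS; exact: sub_count.
- have := IH ys Qy nPy.
  have : P a <= Q a by case Pa: (P a) => //=; rewrite PQ.
  lia.
Qed.

Section Parent.
Variables (F : nat) (T : nset) (m : nat).
Hypotheses (IT : IF F T) (Tm : multiplicity T m) (m_small : 2 * m < F).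

(* F - m is a gap of T, since F = (F - m) + m is not in T. *)
Lemma parent_gap : ~~ T (F - m).
Proof.
have /IF_iff_symmetric [[_ [Tadd _]] [nTF _] _] := IT.
by apply: gap_sub Tm.2.1 _ => //; lia.
Qed.

(* The parent is in I(F): every new sum involving F - m exceeds F. *)
Lemma parent_IF : IF F (swap T m (F - m)).
Proof.
have /IF_iff_symmetric [[T0 [Tadd _]] [nTF TF] _] := IT.
have [m0 [Tm0 _]] := Tm.
have atleast_m := multiplicity_le Tm.
have inS n : T n -> n != m -> swap T m (F - m) n by move=> Tn nm; rewrite /swap Tn nm.
have large n : F < n -> swap T m (F - m) n by move=> nF; apply: inS; [exact: TF | lia].
apply: swap_IF => //; first lia.
move=> a b /orP [/andP [Ta am] | /eqP ->] /orP [/andP [Tb bm] | /eqP ->].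
- have [-> | a0] := posnP a; first by rewrite add0n inS.
  have [-> | b0] := posnP b; first by rewrite addn0 inS.
  by apply: inS; [exact: Tadd | have := atleast_m _ Ta a0; lia].
- have [-> | a0] := posnP a; first by rewrite add0n /swap eqxx orbT.
  by apply: large; have := atleast_m _ Ta a0; lia.
- have [-> | b0] := posnP b; first by rewrite addn0 /swap eqxx orbT.
  by apply: large; have := atleast_m _ Tb b0; lia.
- by apply: large; lia.
Qed.

(* The parent loses the element m < F/2 and gains only F - m > F/2. *)
Lemma parent_rank : nsmall F (swap T m (F - m)) < nsmall F T.
Proof.
have [m0 [Tm0 _]] := Tm.
apply: (count_lt (y := m)) => [z | | |].
- by case/andP=> /orP [/andP [-> _] | /eqP ->] //; lia.
- by rewrite mem_iota; lia.
- by rewrite Tm0; lia.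
- by rewrite /swap eqxx andbF /=; apply/negP => /andP [/eqP]; lia.
Qed.

(* F - m is indecomposable in the parent, since its summands would lie in T. *)
Lemma parent_indecomposable : indecomposable (swap T m (F - m)) (F - m).
Proof.
have /IF_iff_symmetric [[_ [Tadd _]] _ _] := IT.
move=> a b /orP [/andP [Ta _] | /eqP aF] /orP [/andP [Tb _] | /eqP bF] ab; try lia.
have [-> | a0] := posnP a; first by left.
have [-> | b0] := posnP b; first by right.
by move: parent_gap; rewrite -ab Tadd.
Qed.

(* The parent has multiplicity larger than m: its only element below m would be m itself. *)
Lemma parent_multiplicity : exists m', multiplicity (swap T m (F - m)) m' /\ m < m'.
Proof.
have [m' Hm'] := multiplicity_exists parent_IF.1.1.
exists m'; split=> //.
have [m'0 [/orP [/andP [Tm' m'm] | /eqP ->] _]] := Hm'; last lia.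
by have := multiplicity_le Tm Tm' m'0; lia.
Qed.

Lemma parent_child_via : child_via F (swap T m (F - m)) T (F - m).
Proof.
have /IF_iff_symmetric [[_ [Tadd _]] _ _] := IT.
have [m0 [Tm0 _]] := Tm.
have in_gap n : n = F - m -> ~~ T n by move=> ->; exact: parent_gap.
have FmS : swap T m (F - m) (F - m) by rewrite /swap eqxx orbT.
split.
  apply: indecomposable_minimal_generator parent_IF.1.1 FmS _ parent_indecomposable; lia.
split; first lia.
split.
  rewrite /swap negb_or negb_and; apply/andP; split; last lia.
  apply/orP; left; apply: contra (in_gap (2 * (F - m) - F + m) ltac:(lia)) => T2.
  exact: Tadd.
split; first by move=> e; move/negP: (in_gap (m + m) ltac:(lia)); apply; exact: Tadd.
split; first by move=> e; move/negP: (in_gap (m + (m + m)) ltac:(lia)); apply; rewrite !Tadd.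
split; first by have [m' [Hm' mm']] := parent_multiplicity; exists m'; split=> //; lia.
by rewrite subKn ?swapK ?parent_gap //; lia.
Qed.
End Parent.

Lemma child_multiplicity F S x mS : x < F -> multiplicity S mS -> F - x < mS ->
  multiplicity (swap S x (F - x)) (F - x).
Proof.
move=> xF SmS x_mult; split; first lia.
split; first by rewrite /swap eqxx orbT.
by move=> k k0 kx; rewrite /swap negb_or negb_and SmS.2.2 //; lia.
Qed.

(* Indecomposability and conditions (2), (5) handle
   the sums (F - x) + a, conditions (3), (4) the sum (F - x) + (F - x). *)
Section Child.
Variables (F : nat) (S : nset) (x mS : nat).
Hypotheses (IS : IF F S) (x_atom : indecomposable S x).
Hypotheses (x_large : F < 2 * x) (xF : x < F) (gap2 : ~~ S (2 * x - F)).
Hypotheses (x3 : 3 * x <> 2 * F) (x4 : 4 * x <> 3 * F).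
Hypotheses (SmS : multiplicity S mS) (x_mult : F - x < mS).

(* (F - x) + a lies in the swap for every a in S \ {x}: otherwise symmetry would put
   x - a in S and decompose x. *)
Lemma child_shift a : S a -> a != x -> swap S x (F - x) (F - x + a).
Proof.
have /IF_iff_symmetric [[_ [Sadd _]] [_ SF] sym] := IS.
move=> Sa ax; have [-> | a0] := posnP a; first by rewrite addn0 /swap eqxx orbT.
have a_big := multiplicity_le SmS Sa a0.
have a_gap2 : a != 2 * x - F by apply: contraNneq gap2 => <-.
rewrite /swap; apply/orP; left; apply/andP; split; last lia.
have [/SF // | small | e] := ltngtP F (F - x + a); last lia.
apply/negPn/negP => nS.
have : S (F - (F - x + a)).
  apply: sym nS => //; apply: contraNneq gap2 => e.
  by rewrite (_ : 2 * x - F = a + a) ?Sadd //; lia.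
rewrite (_ : F - (F - x + a) = x - a); last lia.
by move=> Sxa; have := x_atom Sxa Sa ltac:(lia); lia.
Qed.

Lemma child_IF : IF F (swap S x (F - x)).
Proof.
have /IF_iff_symmetric [[_ [Sadd _]] _ sym] := IS.
have inS n : S n -> n != x -> swap S x (F - x) n by move=> Sn nx; rewrite /swap Sn nx.
apply: swap_IF => //; first lia.
move=> a b /orP [/andP [Sa ax] | /eqP ->] /orP [/andP [Sb bx] | /eqP ->].
- apply: inS; first exact: Sadd.
  by apply/eqP => e; have := x_atom Sa Sb e; lia.
- by rewrite addnC child_shift.
- exact: child_shift.
- apply: inS; last lia.
  apply/negPn/negP => nS; move/negP: gap2; apply.
  rewrite (_ : 2 * x - F = F - (F - x + (F - x))); last lia.
  by apply: sym nS; lia.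
Qed.
End Child.

Lemma edge_functional F a b c : edge F a b -> edge F a c -> b = c.
Proof.
move=> [_ [_ [m [Hm [_ ->]]]]] [_ [_ [m' [Hm' [_ ->]]]]].
by rewrite (multiplicity_unique Hm Hm').
Qed.

Lemma root_no_edge F b : ~ edge F (CF F) b.
Proof. by move=> [_ [_ [m [/CF_multiplicity Fm [m2 _]]]]]; lia. Qed.

Lemma edge_descent F v : 0 < F -> IF F v -> v <> CF F ->
  exists w, IF F w /\ edge F v w /\ nsmall F w < nsmall F v.
Proof.
move=> F0 Iv vC; have [m Hm] := multiplicity_exists Iv.1.1.
have m2 := small_multiplicity Iv vC Hm.
exists (swap v m (F - m)); split; first exact: parent_IF.
split; last exact: parent_rank.
by split=> //; split; [exact: parent_IF | exists m].
Qed.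

Lemma edge_child_via F S T : edge F T S -> exists x, child_via F S T x.
Proof. by move=> [IT [_ [m [Tm [m2 ->]]]]]; exists (F - m); exact: parent_child_via. Qed.

Lemma child_via_edge F S T x : IF F S -> child_via F S T x -> edge F T S.
Proof.
move=> IS [mg [[x1 x2] [g2 [x3 [x4 [[mS [SmS xm]] ->]]]]]].
have [Sx x_atom] := minimal_generator_indecomposable mg.
have IT := child_IF IS x_atom x1 x2 g2 x3 x4 SmS xm.
split=> //; split=> //; exists (F - x); split; first exact: child_multiplicity x2 SmS xm.
split; first lia.
by rewrite subKn ?swapK ?(SmS.2.2 (F - x)) //; lia.
Qed.

Theorem theorem9 (F : nat) (hF : 0 < F) :
  is_tree (IF F) (edge F) (CF F) /\
  forall S : nset, IF F S ->
    forall T : nset,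
      edge F T S <->
      exists x, minimal_generator S x /\
                (F < 2 * x /\ x < F) /\
                ~~ S (2 * x - F) /\
                3 * x <> 2 * F /\
                4 * x <> 3 * F /\
                (exists m, multiplicity S m /\ F - x < m) /\
                T = swap S x (F - x).
Proof.
split.
  apply: (tree_of_descent (rank := nsmall F)).
  - exact: edge_functional.
  - exact: root_no_edge.
  - by move=> v; apply: edge_descent.
  - exact: CF_IF.
move=> S IS T; split; first exact: edge_child_via.
by move=> [x]; apply: child_via_edge.
Qed.
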